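(* There exists a sequence $(x_n)$ of positive reals with $\sum x_n<\infty$ such that the achievement set $E(x_n)$ is a Cantor set of Hausdorff dimension $0$ and the algebraic sum $E(x_n)+E(x_n)$ is also a Cantor set.
   Context: For a real sequence $(x_n)$, the achievement set is $E(x_n)=\{y\in\mathbb R:\exists A\subset\mathbb N,\ y=\sum_{n\in A}x_n\}$. A Cantor set is a set homeomorphic to the classical ternary Cantor set. For sets $A,B\subset\mathbb R$, $A+B=\{a+b:a\in A,b\in B\}$. *)

From HB Require Import structures.
From mathcomp Require Import all_boot all_order all_algebra.
From mathcomp Require Import all_classical all_reals all_analysis.
From mathcomp Require Import Rstruct Rstruct_topology.
Set Implicit Arguments. Unset Strict Implicit. Unset Printing Implicit Defensive.
Import Order.TTheory GRing.Theory Num.Theory.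
Import numFieldNormedType.Exports.
Local Open Scope classical_set_scope.
Local Open Scope ring_scope.

Section Defs.
Variable R : realType.

Definition achievement_set (x : nat -> R) : set R :=
  [set y | exists A : set nat,
     (series (fun n => if `[< A n >] then x n else 0)) @ \oo --> y].

Definition set_add (A B : set R) : set R :=
  [set z | exists a b, A a /\ B b /\ z = a + b].

Definition ternary_cantor : set R :=
  [set y | exists d : nat -> bool,
     (series (fun n => (2 * (d n)%:R) / 3 ^+ n.+1)) @ \oo --> y].

Definition homeomorphic (A B : set R) : Prop :=
  exists (f g : R -> R),
    (forall a, A a -> B (f a)) /\ (forall b, B b -> A (g b)) /\
    (forall a, A a -> g (f a) = a) /\ (forall b, B b -> f (g b) = b) /\
    {within A, continuous f} /\ {within B, continuous g}.

Definition is_cantor_set (A : set R) : Prop := homeomorphic A ternary_cantor.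

Local Open Scope ereal_scope.

(* diameter of a subset of R, with diam(empty) = 0 *)
Definition diam (U : set R) : \bar R :=
  maxe 0 (ereal_sup [set `|a - b|%:E | a in U & b in U]).

Definition hausdorff_content (s delta : R) (E : set R) : \bar R :=
  ereal_inf [set \sum_(0 <= i <oo) ((fine (diam (U i))) `^ s)%:E |
             U in [set U : nat -> set R |
                     E `<=` \bigcup_i U i /\ forall i, diam (U i) <= delta%:E]].

Definition hausdorff_measure (s : R) (E : set R) : \bar R :=
  ereal_sup [set hausdorff_content s delta E | delta in [set d : R | (0 < d)%R]].

Definition hausdorff_dim (E : set R) : \bar R :=
  ereal_inf [set s%:E | s in [set s : R | (0 <= s)%R /\ hausdorff_measure s E = 0]].

End Defs.

From HB Require Import structures.
From mathcomp Require Import all_boot all_order all_algebra.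
From mathcomp Require Import all_classical all_reals all_analysis.
From mathcomp Require Import Rstruct Rstruct_topology.
From mathcomp Require Import lra zify.
Import Order.TTheory GRing.Theory Num.Theory.
Import numFieldNormedType.Exports.
Local Open Scope classical_set_scope.
Local Open Scope ring_scope.
Set Implicit Arguments. Unset Strict Implicit. Unset Printing Implicit Defensive.

(* Take [x n = 4 ^ (- (n ^ 2 + 1))], so that [x (n + 1) <= x n / 4]. For weights with
   ratio [r < 1/3], a digit expansion [\sum c n * x n] with digits in [{0, 1, 2}] is
   determined by its digits (a change at the first differing index outweighs the
   whole tail) and depends continuously on them. Hence [E(x)] (digits in [{0, 1}])
   and [E(x) + E(x)] (digits in [{0, 1, 2}]) are continuous injective images of the
   compact spaces [{0, 1}^N] and [{0, 1, 2}^N]; so is the ternary Cantor set, with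
   weights [2 / 3 ^ (n + 1)], and [{0, 1, 2}^N] is homeomorphic to [{0, 1}^N].
   Finally [E(x)] is covered by the [2 ^ n] cylinders fixed by the first [n] digits,
   each of diameter at most [4 ^ (- n ^ 2)], and [2 ^ n * 4 ^ (- s n ^ 2)] tends to
   [0] for every [s > 0], so [E(x)] has Hausdorff dimension [0]. *)

Lemma geometric_near (R : realType) (q e : R) : 0 <= q < 1 -> 0 < e ->
  \forall n \near \oo, q ^+ n < e.
Proof.
move=> /andP[q0 q1] e0; have q_lt1 : `|q| < 1 by rewrite ger0_norm.
have /(cvgr0Pnorm_lt _) /(_ _ e0) := cvg_expr q_lt1.
by apply: filterS => n /=; rewrite ger0_norm // exprn_ge0.
Qed.

Definition geometric_weights (R : realType) (w : nat -> R) (r : R) :=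
  [/\ forall n, 0 < w n, forall n, w n.+1 <= r * w n, 0 <= r & r < 1].

Definition expansion (R : realType) (w : nat -> R) (c : nat -> R) : R :=
  limn (series (fun n => c n * w n)).

Definition digit_expansion (R : realType) (D : Type) (phi : D -> nat)
    (w : nat -> R) (x : nat -> D) : R :=
  expansion w (fun n => (phi (x n))%:R).

Section GeometricWeights.
Variables (R : realType) (w : nat -> R) (r : R) (K : nat).
Hypothesis hw : geometric_weights w r.

Let w_gt0 n : 0 < w n. Proof. by case: hw. Qed.
Let w_ratio n : w n.+1 <= r * w n. Proof. by case: hw. Qed.
Let r_ge0 : 0 <= r. Proof. by case: hw. Qed.
Let one_sub_r_gt0 : 0 < 1 - r. Proof. by case: hw; rewrite subr_gt0. Qed.

Lemma weights_le_geometric n : w n <= r ^+ n * w 0.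
Proof.
elim: n => [|n IHn]; first by rewrite mul1r.
by rewrite (le_trans (w_ratio n)) // exprS -mulrA ler_wpM2l.
Qed.

(* Telescoping [(1 - r) w k <= w k - w k.+1]. *)
Lemma sum_weights_le N M : (N <= M)%N ->
  \sum_(N <= k < M) w k <= (w N - w M) / (1 - r).
Proof.
rewrite ler_pdivlMr //; elim: M => [|M IHM].
  by rewrite leqn0 => /eqP ->; rewrite big_geq // subrr mul0r.
rewrite leq_eqVlt => /orP[/eqP ->|NM]; first by rewrite big_geq // subrr mul0r.
rewrite big_nat_recr //= mulrDl; have := IHM NM; have := w_ratio M; lra.
Qed.

Lemma norm_sum_weights_le (d : nat -> R) N M :
  (forall k, `|d k| <= K%:R) -> (N <= M)%N ->
  `|\sum_(N <= k < M) d k * w k| <= K%:R * w N / (1 - r).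
Proof.
move=> dK NM; rewrite (le_trans (ler_norm_sum _ _ _)) //.
rewrite (@le_trans _ _ (\sum_(N <= k < M) K%:R * w k)) //.
  apply: ler_sum => k _; rewrite normrM (gtr0_norm (w_gt0 k)).
  by rewrite ler_wpM2r // ltW.
rewrite -mulr_sumr -mulrA ler_wpM2l // (le_trans (sum_weights_le NM)) //.
rewrite ler_wpM2r ?invr_ge0 ?ltW //; have := w_gt0 M; lra.
Qed.

Lemma expansion_cvg c : (forall k, 0 <= c k <= K%:R) ->
  series (fun n => c n * w n) @ \oo --> expansion w c.
Proof.
move=> cK; apply: nondecreasing_is_cvgn.
  apply/nondecreasing_seqP => n; rewrite seriesSr lerDl.
  by have := cK n; have := w_gt0 n; nra.
exists (K%:R * w 0 / (1 - r)) => _ [n _ <-].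
rewrite (le_trans (ler_norm _)) // norm_sum_weights_le // => k.
by have /andP[c0 cK'] := cK k; rewrite ger0_norm.
Qed.

Lemma expansionD c1 c2 :
  (forall k, 0 <= c1 k <= K%:R) -> (forall k, 0 <= c2 k <= K%:R) ->
  expansion w (fun n => c1 n + c2 n) = expansion w c1 + expansion w c2.
Proof.
move=> c1K c2K; rewrite /expansion.
have -> : series (fun n => (c1 n + c2 n) * w n) =
    (fun n => series (fun n => c1 n * w n) n + series (fun n => c2 n * w n) n).
  apply/funext => n; rewrite /series /= -big_split /=.
  by apply: eq_bigr => k _; rewrite mulrDl.
by apply: limD; [exact: cvgP (expansion_cvg c1K)|exact: cvgP (expansion_cvg c2K)].
Qed.

Let expansion_subE c c' : (forall k, 0 <= c k <= K%:R) ->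
    (forall k, 0 <= c' k <= K%:R) ->
  (fun n => \sum_(0 <= k < n) (c k - c' k) * w k) @ \oo -->
    expansion w c - expansion w c'.
Proof.
move=> cK c'K; apply: cvg_trans (cvgB (expansion_cvg cK) (expansion_cvg c'K)).
apply: near_eq_cvg; near=> n.
by rewrite fctE /series /= -sumrB; apply: eq_bigr => k _; rewrite mulrBl.
Unshelve. all: by end_near.
Qed.

Lemma expansion_prefix_close c c' N :
  (forall k, 0 <= c k <= K%:R) -> (forall k, 0 <= c' k <= K%:R) ->
  (forall k, (k < N)%N -> c k = c' k) ->
  `|expansion w c - expansion w c'| <= K%:R * w N / (1 - r).
Proof.
move=> cK c'K cc'; apply: cvgr_to_le (cvg_norm (expansion_subE cK c'K)) _.
exists N => // n /= Nn.
rewrite (big_cat_nat (leq0n N) Nn) /= big1_seq ?add0r.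
  apply: norm_sum_weights_le => // k.
  by have := cK k; have := c'K k; rewrite ler_norml => /andP[? ?] /andP[? ?]; lra.
by move=> k; rewrite mem_index_iota => /andP[_ kN]; rewrite cc' // subrr mul0r.
Qed.

Lemma expansion_lt c c' m : K%:R * r < 1 - r ->
  (forall k, 0 <= c k <= K%:R) -> (forall k, 0 <= c' k <= K%:R) ->
  (forall k, (k < m)%N -> c k = c' k) -> c' m + 1 <= c m ->
  expansion w c' < expansion w c.
Proof.
move=> Kr cK c'K cc' cm; rewrite -subr_gt0.
have gap_gt0 : 0 < w m - K%:R * w m.+1 / (1 - r).
  rewrite subr_gt0 ltr_pdivrMr //.
  have := w_ratio m; have := w_gt0 m; have := w_gt0 m.+1.
  have : 0 <= K%:R :> R by []; nra.
apply: lt_le_trans gap_gt0 _; apply: cvgr_to_ge (expansion_subE cK c'K) _.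
exists m.+1 => // n /= mn.
rewrite (big_cat_nat (leq0n m.+1) mn) /= big_nat_recr //= big1_seq ?add0r;
  last by move=> k; rewrite mem_index_iota => /andP[_ km]; rewrite cc' // subrr mul0r.
have : `|\sum_(m.+1 <= k < n) (c k - c' k) * w k| <= K%:R * w m.+1 / (1 - r).
  apply: norm_sum_weights_le => // k.
  by have := cK k; have := c'K k; rewrite ler_norml => /andP[? ?] /andP[? ?]; lra.
rewrite ler_norml => /andP[tail_ge _]; have := w_gt0 m; nra.
Qed.

Lemma weights_tail_small e : 0 < e -> exists N, K%:R * w N / (1 - r) < e.
Proof.
move=> e0; have r01 : 0 <= r < 1 by case: hw => _ _ -> ->.
have K_ge0 : 0 <= K%:R :> R by [].
have Kw0 : 0 < (K%:R + 1) * w 0 by apply: mulr_gt0 => //; lra.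
pose e' := e * (1 - r) / ((K%:R + 1) * w 0).
have e'0 : 0 < e' by rewrite divr_gt0 ?mulr_gt0.
have [N] := filter_ex (geometric_near r01 e'0); rewrite ltr_pdivlMr // => rN.
exists N; rewrite ltr_pdivrMr //.
have := weights_le_geometric N; have := w_gt0 N; have := w_gt0 0.
have : 0 <= r ^+ N by rewrite exprn_ge0.
nra.
Qed.

End GeometricWeights.

Lemma weights_summable (R : realType) (w : nat -> R) r :
  geometric_weights w r -> cvg (series w @ \oo).
Proof.
move=> hw; rewrite (_ : w = fun n => 1 * w n); last by apply/funext => n; rewrite mul1r.
by apply: cvgP (expansion_cvg (K := 1) hw _) => k; rewrite ler01 lexx.
Qed.

Lemma nbhs_prod_prefix (D : discreteTopologicalType)
    (x : prod_topology (fun _ : nat => D)) N :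
  nbhs x [set y : prod_topology (fun _ : nat => D) | forall k, (k < N)%N -> y k = x k].
Proof.
elim: N => [|N IHN]; first exact: filterS filterT.
have yN_eq : nbhs x [set y : prod_topology (fun _ : nat => D) | y N = x N].
  have := @proj_continuous nat (fun=> D) N x _ (discrete_set1 (x N)).
  by apply: (@filterS _ (nbhs x)) => y.
apply: filterS (filterI IHN yN_eq) => y [y_eq yN] k.
by rewrite ltnS leq_eqVlt => /orP[/eqP ->|/y_eq].
Qed.

Section DigitExpansions.
Variables (R : realType) (w : nat -> R) (r : R) (K : nat).
Hypothesis hw : geometric_weights w r.

Let digitsP (D : Type) (phi : D -> nat) (x : nat -> D) :
  (forall a, (phi a <= K)%N) -> forall k, 0 <= ((phi (x k))%:R : R) <= K%:R.
Proof. by move=> phiK k; rewrite ler0n ler_nat phiK. Qed.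

Lemma digit_expansion_cvg (D : Type) (phi : D -> nat) (x : nat -> D) :
  (forall a, (phi a <= K)%N) ->
  series (fun n => (phi (x n))%:R * w n) @ \oo --> digit_expansion phi w x.
Proof. by move=> phiK; apply: (expansion_cvg hw); exact: digitsP. Qed.

Lemma digit_expansionD (D E : Type) (phi : D -> nat) (psi : E -> nat) x y :
  (forall a, (phi a <= K)%N) -> (forall b, (psi b <= K)%N) ->
  digit_expansion phi w x + digit_expansion psi w y =
  expansion w (fun n => (phi (x n) + psi (y n))%:R).
Proof.
move=> phiK psiK; rewrite -(expansionD hw (digitsP x phiK) (digitsP y psiK)).
by congr expansion; apply/funext => n; rewrite natrD.
Qed.

Lemma digit_expansion_continuous (D : discreteTopologicalType) (phi : D -> nat) :
  (forall a, (phi a <= K)%N) ->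
  continuous (fun x : prod_topology (fun _ : nat => D) => digit_expansion phi w x).
Proof.
move=> phiK x; apply/(@cvgrPdist_lt _ _ _ _ (nbhs_filter x)) => e e0.
have [N tailN] := weights_tail_small K hw e0.
apply: filterS (nbhs_prod_prefix x N) => y xy.
apply: le_lt_trans _ tailN; apply: (expansion_prefix_close (K := K) hw).
- exact: digitsP.
- exact: digitsP.
- by move=> k /xy ->.
Qed.

Lemma digit_expansion_inj (D : Type) (phi : D -> nat) :
  K%:R * r < 1 - r -> injective phi -> (forall a, (phi a <= K)%N) ->
  injective (digit_expansion phi w).
Proof.
move=> Kr phi_inj phiK x y exy; apply/funext => n; apply: phi_inj.
apply/eqP/negPn/negP => neq_n.
have [m neq_m agree] : exists2 m, phi (x m) != phi (y m) &
    forall k, (k < m)%N -> phi (x k) = phi (y k).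
  have [m neq_m min_m] := ex_minnP (ex_intro (fun k => phi (x k) != phi (y k)) n neq_n).
  by exists m => // k km; apply/eqP/negPn/negP => /min_m; rewrite leqNgt km.
clear n neq_n.
wlog lt_m : x y exy neq_m agree / (phi (x m) < phi (y m))%N.
  move=> hwlog; case: (ltngtP (phi (x m)) (phi (y m))) => [lt_m|gt_m|eq_m].
  - exact: (hwlog x y).
  - by apply: (hwlog y x) => //; [rewrite eq_sym|move=> k /agree ->].
  - by rewrite eq_m eqxx in neq_m.
suff : digit_expansion phi w x < digit_expansion phi w y by rewrite exy ltxx.
apply: (expansion_lt (K := K) hw Kr (digitsP _ phiK) (digitsP _ phiK) (m := m)).
  by move=> k /agree ->.
by rewrite natr1 ler_nat.
Qed.

Lemma digit_expansion_cover (D : finType) (phi : D -> nat) n :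
  (forall a, (phi a <= K)%N) ->
  exists U : nat -> set R,
    range (digit_expansion phi w) `<=` \bigcup_(i in `I_(#|D| ^ n)) U i /\
    forall i a b, U i a -> U i b -> `|a - b| <= K%:R * w n / (1 - r).
Proof.
move=> phiK; pose prefix (x : nat -> D) := [ffun k : 'I_n => x k].
exists (fun i => digit_expansion phi w @` [set x | enum_rank (prefix x) = i :> nat]).
split=> [_ [x _ <-]|i _ _ [x xi <-] [y yi <-]].
  exists (enum_rank (prefix x)); last by exists x.
  have := ltn_ord (enum_rank (prefix x)).
  by rewrite [X in (_ < X)%N -> _]card_ffun card_ord.
have /enum_rank_inj prefix_xy : enum_rank (prefix x) = enum_rank (prefix y).
  by apply: val_inj; rewrite /= xi yi.
apply: (expansion_prefix_close (K := K) hw); try exact: digitsP.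
by move=> k kn; have /ffunP/(_ (Ordinal kn)) := prefix_xy; rewrite !ffunE => ->.
Qed.

End DigitExpansions.

Section AchievementSets.
Variables (R : realType) (w : nat -> R) (r : R).
Hypothesis hw : geometric_weights w r.

Lemma range_bool_expansion :
  range (digit_expansion nat_of_bool w) =
  [set y | exists d : nat -> bool, series (fun n => (d n)%:R * w n) @ \oo --> y].
Proof.
have bool_cvg d := digit_expansion_cvg (x := d) hw leq_b1.
apply/seteqP; split=> [_ [d _ <-]|y [d dy]]; first by exists d; exact: bool_cvg.
by exists d => //; rewrite -(cvg_lim _ dy) //; exact: cvgP (bool_cvg d).
Qed.

Lemma achievement_setE : achievement_set w = range (digit_expansion nat_of_bool w).
Proof.
rewrite range_bool_expansion; apply/seteqP; split=> y [d dy].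
  exists (fun n => `[< d n >]); apply: cvg_trans dy; apply: near_eq_cvg; near=> n.
  by apply: eq_bigr => k _; case: asboolP; rewrite ?mul1r ?mul0r.
exists d; apply: cvg_trans dy; apply: near_eq_cvg; near=> n.
by apply: eq_bigr => k _; rewrite asboolb; case: (d k); rewrite ?mul1r ?mul0r.
Unshelve. all: by end_near.
Qed.

Lemma achievement_set_addE :
  set_add (achievement_set w) (achievement_set w) =
  range (digit_expansion (@nat_of_ord 3) w).
Proof.
have bool_expansionD (d e : nat -> bool) := digit_expansionD hw d e leq_b1 leq_b1.
rewrite achievement_setE; apply/seteqP; split=> [_ [_ [_ [[d _ <-] [[e _ <-] ->]]]]|].
  have de_lt3 n : (d n + e n < 3)%N by case: (d n); case: (e n).
  by exists (fun n => Ordinal (de_lt3 n)); rewrite // bool_expansionD.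
move=> _ [c _ <-].
pose d n := (1 <= c n)%N; pose e n := (c n == 2 :> nat).
exists (digit_expansion nat_of_bool w d), (digit_expansion nat_of_bool w e).
do !split; [by exists d|by exists e|rewrite bool_expansionD].
by congr expansion; apply/funext => n; rewrite /d /e; case: (c n) => -[|[|[|m]]].
Qed.

End AchievementSets.

Section RangeHomeomorphic.
Variables (R : realType) (T : ptopologicalType).
Hypothesis T_compact : compact [set: T].

(* The image of the closed set [~` V] is compact, hence closed, and misses [h x]. *)
Lemma continuous_inj_nbhs_ball (h : T -> R) x (U : set T) :
  continuous h -> injective h -> nbhs x U ->
  exists2 e, 0 < e & forall y, `|h x - h y| < e -> U y.
Proof.
move=> h_cts h_inj; rewrite nbhsE => -[V [V_open Vx] VU].
have hVC_closed : closed (h @` ~` V).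
  apply: compact_closed; first exact: Rhausdorff.
  apply: continuous_compact; first exact: continuous_subspaceT.
  exact: subclosed_compact (open_closedC V_open) T_compact _.
have /nbhs_ballP[e e0 ball_e] : nbhs (h x) (~` (h @` ~` V)).
  by apply: open_nbhs_nbhs; split; [exact: closed_openC|move=> [y /[swap] /h_inj ->]].
exists e => // y hxy; apply: VU; apply: contrapT => Vy.
by apply: (ball_e (h y)); [rewrite -ball_normE|exists y].
Qed.

Let pinvT (h : T -> R) := pinv [set: T] h.

Let pinvTK (h : T -> R) : injective h -> cancel h (pinvT h).
Proof. by move=> h_inj x; rewrite /pinvT pinvKV // ?inE // => ? ? _ _ /h_inj. Qed.

Lemma continuous_within_range_pinv (h1 h2 : T -> R) :
  continuous h1 -> continuous h2 -> injective h1 ->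
  {within range h1, continuous (h2 \o pinvT h1)}.
Proof.
move=> h1_cts h2_cts h1_inj; apply/subspace_continuousP => _ [x _ <-] W.
rewrite /from_subspace /= pinvTK // => W_h2x.
have W_nbhs := h2_cts x _ W_h2x.
have [e e0 ball_e] := continuous_inj_nbhs_ball (U := h2 @^-1` W) h1_cts h1_inj W_nbhs.
apply/nbhs_ballP; exists e => // b ball_b [y _ yb]; move: ball_b.
by rewrite -yb -ball_normE /= pinvTK //; exact: ball_e.
Qed.

Lemma range_homeomorphic (h1 h2 : T -> R) :
  continuous h1 -> continuous h2 -> injective h1 -> injective h2 ->
  homeomorphic (range h1) (range h2).
Proof.
move=> h1_cts h2_cts h1_inj h2_inj.
exists (h2 \o pinvT h1), (h1 \o pinvT h2); do !split.
- by move=> a _; exists (pinvT h1 a).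
- by move=> b _; exists (pinvT h2 b).
- by move=> _ [x _ <-] /=; rewrite !pinvTK.
- by move=> _ [x _ <-] /=; rewrite !pinvTK.
- exact: continuous_within_range_pinv.
- exact: continuous_within_range_pinv.
Qed.

End RangeHomeomorphic.

(* [tree_of] needs pointed levels, and [cantor_like_finite_prod] topological ones. *)
Definition digit3 : Type := 'I_3.
HB.instance Definition _ := Choice.on digit3.
HB.instance Definition _ := isPointed.Build digit3 ord0.
Definition digit3_topology : Type := discrete_topology digit3.
HB.instance Definition _ := DiscreteTopology.on digit3_topology.
HB.instance Definition _ := Pointed.on digit3_topology.

Lemma tree3_cantor_like : cantor_like (tree_of (fun _ : nat => digit3_topology)).
Proof.
apply: cantor_like_finite_prod => [n|n]; first exact: finite_finset.
by exists (ord0, ord_max).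
Qed.

Lemma nat_of_bool_inj : injective nat_of_bool.
Proof. by do 2!case. Qed.

Section CantorSets.
Variable R : realType.

Definition ternary_weight n : R := 2 / 3 ^+ n.+1.

Lemma ternary_weight_geometric : geometric_weights ternary_weight 3^-1.
Proof.
split=> [n|n||].
- by rewrite divr_gt0 ?exprn_gt0.
- by rewrite /ternary_weight exprS invfM mulrCA.
- by rewrite invr_ge0.
- by rewrite invf_lt1 // ltr1n.
Qed.

Lemma ternary_cantorE :
  @ternary_cantor R = range (digit_expansion nat_of_bool ternary_weight).
Proof.
rewrite (range_bool_expansion ternary_weight_geometric).
have digitsE (d : nat -> bool) : (fun n => 2 * (d n)%:R / 3 ^+ n.+1 : R) =
    (fun n => (d n)%:R * ternary_weight n).
  by apply/funext => n; rewrite /ternary_weight mulrA [_ * 2]mulrC.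
by apply/seteqP; split=> y [d dy]; exists d; rewrite ?digitsE in dy *.
Qed.

Lemma is_cantor_set_range (h : cantor_space -> R) :
  continuous h -> injective h -> is_cantor_set (range h).
Proof.
move=> h_cts h_inj; rewrite /is_cantor_set ternary_cantorE.
apply: (range_homeomorphic cantor_space_compact) => //.
  exact: (digit_expansion_continuous ternary_weight_geometric leq_b1).
apply: (digit_expansion_inj ternary_weight_geometric _ nat_of_bool_inj leq_b1).
by rewrite mul1r; lra.
Qed.

Lemma is_cantor_set_bool_expansion (w : nat -> R) r :
  geometric_weights w r -> r < 1 - r ->
  is_cantor_set (range (digit_expansion nat_of_bool w)).
Proof.
move=> hw r_lt; apply: is_cantor_set_range.
  exact: (digit_expansion_continuous hw leq_b1).
by apply: (digit_expansion_inj hw _ nat_of_bool_inj leq_b1); rewrite mul1r.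
Qed.

Lemma is_cantor_set_ord3_expansion (w : nat -> R) r :
  geometric_weights w r -> 2%:R * r < 1 - r ->
  is_cantor_set (range (digit_expansion (@nat_of_ord 3) w)).
Proof.
move=> hw r_lt.
have [f [f_cts _]] := @homeomorphism_cantor_like R _ tree3_cantor_like.
have [_ /in2TT f_inj f_surj] := 'bij_f.
have range_f : range f = setT by apply/seteqP; split=> // c _; exact: f_surj.
rewrite -range_f image_comp; apply: is_cantor_set_range.
  have ord3_le2 (a : discrete_topology digit3_topology) : (a <= 2)%N by rewrite -ltnS.
  move=> x; apply: continuous_comp; first exact: f_cts.
  exact: (digit_expansion_continuous hw ord3_le2).
by move=> a b /(digit_expansion_inj hw r_lt val_inj (fun a => leq_ord a)) /f_inj.
Qed.

End CantorSets.

Section HausdorffDimension.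
Variable R : realType.
Local Open Scope ereal_scope.

Lemma diam_ge0 (S : set R) : 0 <= diam S.
Proof. by rewrite /diam le_max lexx. Qed.

Lemma diam_le (S : set R) (t : R) : (0 <= t)%R ->
  (forall a b, S a -> S b -> `|a - b| <= t)%R -> diam S <= t%:E.
Proof.
move=> t0 St; rewrite /diam ge_max lee_fin t0 /=.
by apply: ge_ereal_sup => _ [a Sa [b Sb <-]]; rewrite lee_fin St.
Qed.

Lemma diam_set0 : diam (@set0 R) = 0.
Proof. by apply/eqP; rewrite eq_le diam_ge0 diam_le // => a b []. Qed.

Lemma hausdorff_content_ge0 s δ (S : set R) : 0 <= hausdorff_content s δ S.
Proof.
apply: le_ereal_inf_tmp => _ [U _ <-].
by apply: nneseries_ge0 => i _ _; rewrite lee_fin powR_ge0.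
Qed.

Lemma nneseries_powR_le s t (B : nat) (g : nat -> R) : (0 < s)%R -> (0 <= t)%R ->
  (forall i, 0 <= g i <= if (i < B)%N then t else 0)%R ->
  \sum_(0 <= i <oo) ((g i) `^ s)%:E <= (B%:R * t `^ s)%:E.
Proof.
move=> s0 t0 gB; pose v i := ((if (i < B)%N then t else 0) `^ s)%:E.
apply: (@le_trans _ _ (\sum_(0 <= i <oo) v i)).
  apply: lee_nneseries => [i _ _|i _]; first by rewrite lee_fin powR_ge0.
  have /andP[gi0 giB] := gB i.
  by rewrite lee_fin ge0_ler_powR ?nnegrE ?(ltW s0) //; case: ifP.
rewrite (@nneseries_split _ _ 0 B); last by move=> k _; rewrite lee_fin powR_ge0.
rewrite add0n eseries0 ?adde0; last first.
  by move=> i Bi _; rewrite /v ltnNge Bi /= powR0 // gt_eqF.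
rewrite (@eq_big_nat _ _ _ 0 B _ (fun _ => (t `^ s)%:E)); last first.
  by move=> i /andP[_ iB]; rewrite /v iB.
by rewrite sumEFin sumr_const_nat subn0 lee_fin mulr_natl.
Qed.

(* Pad the finite cover with empty sets, which contribute [0 `^ s = 0] since [s > 0]. *)
Lemma hausdorff_content_le_cover s δ t (S : set R) (B : nat) (U : nat -> set R) :
  (0 < s)%R -> (0 <= t <= δ)%R -> S `<=` \bigcup_(i in `I_B) U i ->
  (forall i a b, (i < B)%N -> U i a -> U i b -> `|a - b| <= t)%R ->
  hausdorff_content s δ S <= (B%:R * t `^ s)%:E.
Proof.
move=> s0 /andP[t0 tδ] SU Ut; pose V i := if (i < B)%N then U i else set0.
have diamV i : diam (V i) <= (if (i < B)%N then t else 0)%:E.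
  rewrite /V; case: ifP => iB; last by rewrite diam_set0.
  by apply: diam_le t0 _ => a b; exact: Ut.
apply: (@le_trans _ _ (\sum_(0 <= i <oo) ((fine (diam (V i))) `^ s)%:E)).
  apply: ereal_inf_lbound; exists V => //; split.
    by move=> a /SU[i /= iB Uia]; exists i; rewrite /V ?iB.
  move=> i; apply: le_trans (diamV i) _; rewrite lee_fin.
  by case: ifP => // _; apply: le_trans tδ.
apply: nneseries_powR_le => // i; have := diamV i; have := diam_ge0 (V i).
by case: (diam (V i)) => //= d; rewrite !lee_fin => -> ->.
Qed.

Lemma hausdorff_measure_eq0 s (S : set R) :
  (forall δ, 0 < δ -> hausdorff_content s δ S = 0)%R -> hausdorff_measure s S = 0.
Proof.
move=> S0; apply/eqP; rewrite eq_le; apply/andP; split.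
  by apply: ge_ereal_sup => _ [δ δ0 <-]; rewrite S0.
by rewrite -(S0 1%R) ?ltr01 //; apply: ereal_sup_ubound; exists 1%R; rewrite /= ?ltr01.
Qed.

Lemma hausdorff_dim_eq0 (S : set R) :
  (forall s, 0 < s -> hausdorff_measure s S = 0)%R -> hausdorff_dim S = 0.
Proof.
move=> S0; apply/eqP; rewrite eq_le; apply/andP; split.
  apply/lee_addgt0Pr => e e0; rewrite add0e.
  by apply: ereal_inf_lbound; exists e => //; split; [exact: ltW|exact: S0].
by apply: le_ereal_inf_tmp => _ [s [s0 _] <-]; rewrite lee_fin.
Qed.

Lemma hausdorff_dim_eq0_small_covers (S : set R) :
  (forall s δ e, 0 < s -> 0 < δ -> 0 < e ->
    exists (B : nat) (t : R) (U : nat -> set R),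
    [/\ 0 <= t <= δ, B%:R * t `^ s <= e, S `<=` \bigcup_(i in `I_B) U i &
      forall i a b, (i < B)%N -> U i a -> U i b -> `|a - b| <= t])%R ->
  hausdorff_dim S = 0.
Proof.
move=> small_covers; apply: hausdorff_dim_eq0 => s s0.
apply: hausdorff_measure_eq0 => δ δ0; apply/eqP; rewrite eq_le.
rewrite hausdorff_content_ge0 andbT; apply/lee_addgt0Pr => e e0; rewrite add0e.
have [B [t [U [tδ Bts SU Ut]]]] := small_covers s δ e s0 δ0 e0.
by rewrite (le_trans (hausdorff_content_le_cover s0 tδ SU Ut)) ?lee_fin.
Qed.

End HausdorffDimension.

Local Notation R := Rdefinitions.R.

Definition xseq (n : nat) : R := (4^-1) ^+ (n * n).+1.

Lemma xseq_geometric : geometric_weights xseq 4^-1.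
Proof.
split=> [n|n||]; rewrite ?invr_ge0 ?invf_lt1 ?ltr1n ?exprn_gt0 ?invr_gt0 //.
rewrite /xseq -exprS (_ : (n.+1 * n.+1).+1 = (n * n).+2 + n.*2)%N; last lia.
rewrite exprD -[X in _ <= X]mulr1 ler_wpM2l ?exprn_ge0 ?invr_ge0 //.
by rewrite exprn_ile1 ?invr_ge0 ?invf_le1 ?ler1n.
Qed.

Lemma xseq_cylinder_diam n : 1%:R * xseq n / (1 - 4^-1) <= (4^-1) ^+ (n * n).
Proof.
rewrite mul1r /xseq exprSr ler_pdivrMr; last lra.
have : 0 <= (4^-1) ^+ (n * n) :> R by rewrite exprn_ge0 // invr_ge0.
lra.
Qed.

(* With [q = 4 ^ (- s)]: for large [n], [q ^ n <= 1/4], hence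
   [2 ^ n * q ^ (n * n) <= 2 ^ n * 4 ^ (- n) = 2 ^ (- n)]. *)
Lemma cylinder_scale_small (s δ e : R) : 0 < s -> 0 < δ -> 0 < e ->
  \forall n \near \oo,
    (4^-1) ^+ (n * n) <= δ /\ (2 ^ n)%:R * ((4^-1) ^+ (n * n)) `^ s <= e.
Proof.
move=> s0 δ0 e0; pose q := (4^-1 : R) `^ s.
have q_ge0 : 0 <= q by exact: powR_ge0.
have q_lt1 : q < 1.
  apply: (@lt_le_trans _ _ (1 `^ s)); last by rewrite powR1.
  by rewrite gt0_ltr_powR ?nnegrE ?invr_ge0 ?invf_lt1 ?ltr1n.
have quarter : 0 <= (4^-1 : R) < 1 by apply/andP; split; lra.
have half : 0 <= (2^-1 : R) < 1 by apply/andP; split; lra.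
have q_quarter : 0 <= q < 1 by rewrite q_ge0 q_lt1.
have quarter_gt0 : 0 < 4^-1 :> R by rewrite invr_gt0.
apply: filterS (filterI (geometric_near quarter δ0)
  (filterI (geometric_near half e0) (geometric_near q_quarter quarter_gt0))).
move=> n [quarter_n [half_n q_n]]; split.
  apply: ltW; apply: le_lt_trans quarter_n.
  by rewrite ler_wiXn2l ?invr_ge0 ?invf_le1 ?ler1n //; nia.
have qnn : ((4^-1) ^+ (n * n)) `^ s <= (4^-1) ^+ n.
  rewrite -powR_mulrn ?invr_ge0 // -powRrM mulrC powRrM powR_mulrn // -/q exprM.
  by rewrite lerXn2r ?nnegrE ?exprn_ge0 ?invr_ge0 // ltW.
rewrite (le_trans (ler_wpM2l _ qnn)) // natrX -exprMn; apply: ltW.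
by rewrite (_ : 2%:R * 4^-1 = 2^-1) //; lra.
Qed.

Lemma hausdorff_dim_achievement_xseq : hausdorff_dim (achievement_set xseq) = 0%E.
Proof.
rewrite (achievement_setE xseq_geometric).
apply: hausdorff_dim_eq0_small_covers => s δ e s0 δ0 e0.
have [n [scale_δ scale_e]] := filter_ex (cylinder_scale_small s0 δ0 e0).
have [U [cover diamU]] := digit_expansion_cover xseq_geometric n leq_b1.
exists (2 ^ n)%N, ((4^-1) ^+ (n * n)), U; split => //.
- by rewrite scale_δ exprn_ge0 // invr_ge0.
- by rewrite card_bool in cover.
- by move=> i a b _ Uia Uib; apply: le_trans (diamU i a b Uia Uib) (xseq_cylinder_diam n).
Qed.

Theorem mainTheorem2 :
  exists x : nat -> Rdefinitions.R,
    [/\ (forall n, 0 < x n),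
        cvg (series x @ \oo),
        is_cantor_set (achievement_set x),
        hausdorff_dim (achievement_set x) = 0%E
      & is_cantor_set (set_add (achievement_set x) (achievement_set x))].
Proof.
have [xseq_gt0 _ _ _] := xseq_geometric.
exists xseq; split => //.
- exact: weights_summable xseq_geometric.
- rewrite (achievement_setE xseq_geometric).
  by apply: is_cantor_set_bool_expansion xseq_geometric _; lra.
- exact: hausdorff_dim_achievement_xseq.
- rewrite (achievement_set_addE xseq_geometric).
  by apply: is_cantor_set_ord3_expansion xseq_geometric _; lra.
Qed.
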